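(* Let $K_{n_1,n_2,n_3}$ be the complete tripartite graph with parts $V_1,V_2,V_3$ and vertex set $V=V_1\cup V_2\cup V_3$, where $n_i=|V_i|\ge 2$ for $i=1,2,3$. Then the diameter of the 1-skeleton of $\mathrm{CUT}(K_{n_1,n_2,n_3})$ equals $2$.
   Context: For an undirected graph $G=(V,E)$ and $S\subseteq V$, $\delta(S)\subseteq E$ denotes the set of edges with exactly one endpoint in $S$, and $\mathbf v(S)\in\{0,1\}^{E}$ is its incidence vector ($v(S)_e=1$ iff $e\in\delta(S)$). The cut polytope is $\mathrm{CUT}(G)=\operatorname{conv}\{\mathbf v(S):S\subseteq V\}\subset\mathbb R^{E}$. The 1-skeleton of a polytope is the graph whose vertices are the polytope's vertices and whose edges are its one-dimensional faces; the diameter is the maximum shortest-path edge distance between two vertices of this graph. *)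

From HB Require Import structures.
From mathcomp Require Import all_boot all_order all_algebra.
Set Implicit Arguments. Unset Strict Implicit. Unset Printing Implicit Defensive.
Import Order.TTheory GRing.Theory Num.Theory.
Local Open Scope ring_scope.

Section CutPolytope.
Variables (R : realFieldType) (T : finType) (adj : rel T).

Definition is_edge (e : {set T}) : bool :=
  [exists x, [exists y, adj x y && (e == [set x; y])]].

Definition edgeT : finType := {e : {set T} | is_edge e}.

Definition point := {ffun edgeT -> R}.

Definition cutvec (S : {set T}) : point :=
  [ffun e : edgeT => if #|val e :&: S| == 1%N then 1 else 0].

Definition cut_polytope (x : point) : Prop :=
  exists lam : {ffun {set T} -> R},
    (forall S, 0 <= lam S) /\ \sum_S lam S = 1 /\
    x = [ffun e => \sum_S lam S * cutvec S e].

Definition dot (c x : point) : R := \sum_e c e * x e.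

(* Faces of a convex set Q (intersection with a supporting hyperplane;
   includes Q itself via c = 0, d = 0). *)
Definition is_face (Q F : point -> Prop) : Prop :=
  exists (c : point) (d : R),
    (forall x, Q x -> dot c x <= d) /\
    (forall x, F x <-> (Q x /\ dot c x = d)).

Definition is_vertex (Q : point -> Prop) (u : point) : Prop :=
  is_face Q (fun x => x = u).

Definition affdim1 (F : point -> Prop) : Prop :=
  exists a b, F a /\ F b /\ a <> b /\
    forall x, F x -> exists t : R, x = [ffun e => a e + t * (b e - a e)].

Definition skel_adj (Q : point -> Prop) (u v : point) : Prop :=
  is_vertex Q u /\ is_vertex Q v /\ u <> v /\
  exists F, is_face Q F /\ affdim1 F /\ F u /\ F v.

End CutPolytope.
Arguments cut_polytope R {T} adj x.

Inductive walk_le {X : Type} (r : X -> X -> Prop) : nat -> X -> X -> Prop :=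
| walk_nil k u : walk_le r k u u
| walk_cons k u v w : r u v -> walk_le r k v w -> walk_le r k.+1 u w.

Definition skel_diameter {R : realFieldType} {T : finType} {adj : rel T}
  (Q : point R adj -> Prop) (d : nat) : Prop :=
  (forall u v, is_vertex Q u -> is_vertex Q v -> walk_le (skel_adj Q) d u v) /\
  (exists u v, is_vertex Q u /\ is_vertex Q v /\
               ~ walk_le (skel_adj Q) d.-1 u v).

Definition tri_vertex (n1 n2 n3 : nat) : finType :=
  ('I_n1 + ('I_n2 + 'I_n3))%type.

Definition tri_part {n1 n2 n3 : nat} (x : tri_vertex n1 n2 n3) : nat :=
  match x with inl _ => 0 | inr (inl _) => 1 | inr (inr _) => 2 end%N.

Definition tri_adj (n1 n2 n3 : nat) : rel (tri_vertex n1 n2 n3) :=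
  fun x y => tri_part x != tri_part y.
Arguments tri_adj n1 n2 n3 : clear implicits.

(* The vertices of CUT(G) are the cut vectors v(S).  If both shores of a set A
   induce connected subgraphs, then v(S) and v(S Δ A) are adjacent: the face of
   points agreeing with v(S) outside δ(A) contains no other cut vector, so it is
   the segment between them.  In K_{n1,n2,n3} with all parts of size at least 2,
   every W admits a B such that both B and B Δ W have connected shores: B = ∅ if
   W and its complement each meet two parts, and otherwise B consists of one
   vertex in each of the two parts avoiding W (or its complement).  With
   W = S Δ S' this gives the path v(S), v(S Δ B), v(S').  Conversely
   v({a}) + v(V1 \ {a}) = v(∅) + v(V1) for a in V1, so every face containing
   v(∅) and v(V1) also contains v({a}), which is off the line through them. *)

From mathcomp Require Import all_boot all_order all_algebra ring lra.
Set Implicit Arguments. Unset Strict Implicit. Unset Printing Implicit Defensive.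
Import Order.TTheory GRing.Theory Num.Theory.
Local Open Scope ring_scope.

Definition symdiff (T : finType) (A B : {set T}) : {set T} :=
  [set x | (x \in A) (+) (x \in B)].

Lemma in_symdiff (T : finType) (A B : {set T}) x :
  (x \in symdiff A B) = (x \in A) (+) (x \in B).
Proof. by rewrite inE. Qed.

Lemma card_set2I (T : finType) (x y : T) (S : {set T}) : x != y ->
  #|[set x; y] :&: S| = ((x \in S) + (y \in S))%N.
Proof.
move=> nxy.
have -> : #|[set x; y] :&: S| = #|[seq z <- [:: x; y] | z \in S]|.
  by apply: eq_card => z; rewrite !inE mem_filter !inE andbC.
rewrite (card_uniqP _) ?filter_uniq /= ?inE ?nxy //.
by case: (x \in S); case: (y \in S).
Qed.

Section Walks.
Variables (X : Type) (r : X -> X -> Prop).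

Lemma walk_le2 u v w : (u = v \/ r u v) -> (v = w \/ r v w) -> walk_le r 2 u w.
Proof.
case=> [<-|huv]; case=> [<-|hvw].
- exact: walk_nil.
- exact: walk_cons hvw (walk_nil _ _ _).
- exact: walk_cons huv (walk_nil _ _ _).
- exact: walk_cons huv (walk_cons hvw (walk_nil _ _ _)).
Qed.

Lemma walk_le1 u v : walk_le r 1 u v -> u = v \/ r u v.
Proof.
move=> h; inversion_clear h as [|k x y z huy hyv]; first by left.
by inversion hyv; subst; right.
Qed.

End Walks.

Section Faces.
Variables (R : realFieldType) (T : finType) (adj : rel T) (Q : point R adj -> Prop).

Lemma face_sum_mem (F : point R adj -> Prop) u v w w' :
  is_face Q F -> F u -> F v -> Q w -> Q w' ->
  (forall e, w e + w' e = u e + v e) -> F w.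
Proof.
move=> [c [d [hle hF]]] /hF [_ du] /hF [_ dv] hw hw' hsum.
have dotD x y : dot c x + dot c y = \sum_e c e * (x e + y e).
  by rewrite /dot -big_split; apply: eq_bigr => e _; rewrite mulrDr.
have hdot : dot c w + dot c w' = dot c u + dot c v.
  by rewrite !dotD; apply: eq_bigr => e _; rewrite hsum.
have le_w := hle _ hw; have le_w' := hle _ hw'.
by apply/hF; split => //; rewrite du dv in hdot; lra.
Qed.

Lemma affdim1_eq (F : point R adj -> Prop) (u v w : point R adj) e :
  affdim1 F -> F u -> F v -> F w -> u e != v e -> w e = v e -> w = v.
Proof.
move=> [p [q [_ [_ [_ line]]]]] /line [tu ->] /line [tv ->] /line [tw ->].
rewrite !ffunE; set d := q e - p e => neq eqwv.
have dn0 : d != 0 by apply: contraNneq neq => ->; rewrite !mulr0.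
have : (tw - tv) * d = 0 by rewrite mulrBl (addrI _ eqwv) subrr.
by move/eqP; rewrite mulf_eq0 (negbTE dn0) orbF subr_eq0 => /eqP ->.
Qed.

End Faces.

Section CutVectors.
Variables (R : realFieldType) (T : finType) (adj : rel T).
Hypothesis adj_neq : forall x y, adj x y -> x != y.

Local Notation Q := (cut_polytope R adj).
Local Notation cv := (cutvec R adj).

Definition cutb (S : {set T}) (e : edgeT adj) : bool := #|val e :&: S| == 1%N.

Lemma cutvecE S e : cv S e = if cutb S e then 1 else 0.
Proof. by rewrite ffunE. Qed.

Lemma cutvec_eqE S U e : (cv U e == cv S e) = (cutb U e == cutb S e).
Proof.
rewrite !cutvecE; do 2 case: cutb; rewrite ?eqxx ?oner_eq0 //.
by rewrite eq_sym oner_eq0.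
Qed.

Lemma edge_ends (e : edgeT adj) : exists x y, adj x y /\ val e = [set x; y].
Proof.
case: e => /= E /existsP [x /existsP [y /andP [hxy /eqP ->]]].
by exists x, y.
Qed.

Lemma cutb_ends S e x y : adj x y -> val e = [set x; y] ->
  cutb S e = (x \in S) (+) (y \in S).
Proof.
move=> /adj_neq nxy he; rewrite /cutb he card_set2I //.
by case: (x \in S); case: (y \in S).
Qed.

Lemma edge_of_proof x y : adj x y -> is_edge adj [set x; y].
Proof.
by move=> hxy; apply/existsP; exists x; apply/existsP; exists y; rewrite hxy eqxx.
Qed.

Definition edge_of x y (hxy : adj x y) : edgeT adj :=
  exist _ [set x; y] (edge_of_proof hxy).

Lemma cutb_edge_of S x y (hxy : adj x y) :
  cutb S (edge_of hxy) = (x \in S) (+) (y \in S).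
Proof. exact: cutb_ends. Qed.

Lemma cutb_symdiff S X e : cutb (symdiff S X) e = cutb S e (+) cutb X e.
Proof.
have [x [y [hxy he]]] := edge_ends e.
by rewrite !(cutb_ends _ hxy he) !in_symdiff addbACA.
Qed.

(* Connectivity of the subgraph induced on X, phrased through 2-colourings:
   a colouring that is constant along the edges inside X is constant on X. *)
Definition induced_connected (X : {set T}) : Prop :=
  forall f : T -> bool, {in X &, forall x y, adj x y -> f x = f y} ->
  {in X &, forall x y, f x = f y}.

Definition shores_connected (A : {set T}) : Prop :=
  induced_connected A /\ induced_connected (~: A).

Lemma induced_connected0 : induced_connected set0.
Proof. by move=> f _ x y; rewrite inE. Qed.

Lemma shores_connectedC A : shores_connected A -> shores_connected (~: A).
Proof. by rewrite /shores_connected setCK => -[]. Qed.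

Lemma shores_connected_side A (f : T -> bool) : shores_connected A ->
  (forall x y, adj x y -> (x \in A) = (y \in A) -> f x = f y) ->
  forall x y, (x \in A) = (y \in A) -> f x = f y.
Proof.
move=> [connA connC] hf x y hA; case xA: (x \in A).
  apply: connA => //; last by rewrite -hA.
  by move=> u v uA vA huv; apply: hf; rewrite // uA vA.
apply: connC; rewrite ?inE -?hA ?xA //.
move=> u v; rewrite !inE => /negbTE uA /negbTE vA huv.
by apply: hf; rewrite // uA vA.
Qed.

Lemma cut_sub_shores_connected A X : shores_connected A ->
  (forall e, cutb X e -> cutb A e) -> cutb X =1 pred0 \/ cutb X =1 cutb A.
Proof.
move=> hA sub.
have edge_same x y : adj x y -> (x \in A) = (y \in A) -> (x \in X) = (y \in X).
  move=> hxy hA'; have := sub (edge_of hxy); rewrite !cutb_edge_of hA' addbb.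
  by case: (x \in X); case: (y \in X) => // /(_ isT).
have same_side := shores_connected_side hA edge_same.
case: (boolP [exists x in A, exists y in ~: A, (x \in X) != (y \in X)]).
  case/exists_inP=> x0 x0A /exists_inP [y0 /[!inE] /negbTE y0A x0y0]; right => e.
  have memX z : (z \in X) = (z \in A) (+) (y0 \in X).
    case zA: (z \in A); last by rewrite (same_side z y0) // y0A.
    by rewrite (same_side z x0) ?x0A //; move: x0y0; case: (x0 \in X); case: (y0 \in X).
  have [x [y [hxy he]]] := edge_ends e.
  rewrite !(cutb_ends _ hxy he) (memX x) (memX y).
  by case: (x \in A); case: (y \in A); case: (y0 \in X).
rewrite negb_exists_in => /forall_inP none; left => e.
have cross u v : u \in A -> v \notin A -> (u \in X) = (v \in X).
  move=> uA vA; move: (none u uA); rewrite negb_exists_in => /forall_inP.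
  by move=> /(_ v); rewrite inE vA negbK => /(_ isT) /eqP.
have [x [y [hxy he]]] := edge_ends e; rewrite (cutb_ends _ hxy he) /=.
have sameX : (x \in X) = (y \in X).
  case xA: (x \in A); case yA: (y \in A); try by apply: same_side; rewrite xA yA.
    by apply: cross; rewrite ?xA ?yA.
  by apply/esym/cross; rewrite ?xA ?yA.
by rewrite sameX addbb.
Qed.

Lemma cut_polytope_cutvec S : Q (cv S).
Proof.
exists [ffun U => if U == S then 1 else 0]; split; [|split].
- by move=> U; rewrite ffunE; case: eqP.
- by rewrite (bigD1 S) //= ffunE eqxx big1 ?addr0 // => U /negbTE hU; rewrite ffunE hU.
- apply/ffunP=> e; rewrite [RHS]ffunE (bigD1 S) //= [X in X * _]ffunE eqxx mul1r.
  by rewrite big1 ?addr0 // => U /negbTE hU; rewrite [X in X * _]ffunE hU mul0r.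
Qed.

Lemma cut_polytope_bounds x : Q x -> forall e, 0 <= x e <= 1.
Proof.
move=> [lam [hge [h1 ->]]] e; rewrite ffunE; apply/andP; split.
  by apply: sumr_ge0 => S _; rewrite cutvecE; case: cutb; rewrite ?mulr1 ?mulr0.
rewrite -h1; apply: ler_sum => S _; rewrite cutvecE.
by case: cutb; rewrite ?mulr1 ?mulr0.
Qed.

Lemma dot_comb c (lam : {ffun {set T} -> R}) :
  dot c [ffun e => \sum_S lam S * cv S e] = \sum_S lam S * dot c (cv S).
Proof.
rewrite /dot; under eq_bigr => e _ do rewrite ffunE mulr_sumr.
rewrite exchange_big; apply: eq_bigr => S _; rewrite mulr_sumr.
by apply: eq_bigr => e _; rewrite mulrCA.
Qed.

Lemma face_cutvec_support F (lam : {ffun {set T} -> R}) :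
  is_face Q F -> (forall U, 0 <= lam U) -> \sum_U lam U = 1 ->
  F [ffun e => \sum_U lam U * cv U e] -> forall U, lam U != 0 -> F (cv U).
Proof.
move=> [c [d [hle hF]]] hge h1 /hF [_ hd] U hU.
have hsum : \sum_V lam V * (d - dot c (cv V)) = 0.
  under eq_bigr do rewrite mulrBr.
  by rewrite sumrB -mulr_suml h1 mul1r -dot_comb hd subrr.
have hterm V : 0 <= lam V * (d - dot c (cv V)).
  by rewrite mulr_ge0 // subr_ge0; apply/hle/cut_polytope_cutvec.
have /eqP := psumr_eq0P (fun V _ => hterm V) hsum (i := U) isT.
rewrite mulf_eq0 (negbTE hU) subr_eq0 => /eqP hdU.
by apply/hF; split; [exact: cut_polytope_cutvec|].
Qed.

Lemma vertex_cutvecP u : is_vertex Q u -> exists S, u = cv S.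
Proof.
move=> hu; have hQu : Q u by case: hu => c [d [_ /(_ u) [/(_ erefl) []]]].
have [lam [hge [h1 hul]]] := hQu.
have [S /andP [_ lamS]] : exists S, true && (0 < lam S).
  by apply: psumr_neq0P => [S _|]; rewrite ?h1 ?hge //; apply/eqP/oner_neq0.
exists S; apply/esym/(face_cutvec_support hu hge h1); first by rewrite -hul.
by rewrite gt_eqF.
Qed.

Definition agree_cut (S : {set T}) (D : pred (edgeT adj)) (x : point R adj) : Prop :=
  Q x /\ forall e, ~~ D e -> x e = cv S e.

(* Supported by [c = 1 on delta(S), -1 off it, 0 on D]: the slack of x is the
   L1-distance from x to v(S) off D. *)
Lemma is_face_agree_cut S D : is_face Q (agree_cut S D).
Proof.
pose c : point R adj := [ffun e => if D e then 0 else if cutb S e then 1 else -1].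
pose d := \sum_e (if D e then 0 else cv S e).
pose gap (x : point R adj) e : R :=
  if D e then 0 else if cutb S e then 1 - x e else x e.
have slack x : d - dot c x = \sum_e gap x e.
  rewrite /dot -sumrB; apply: eq_bigr => e _; rewrite /gap [c e]ffunE cutvecE.
  by case: (D e); case: (cutb S e); rewrite ?mul0r ?mul1r ?mulN1r ?subr0 ?sub0r ?opprK.
have gap_ge0 x e : Q x -> 0 <= gap x e.
  move=> /cut_polytope_bounds /(_ e) /andP [x_ge0 x_le1].
  by rewrite /gap; case: (D e); case: (cutb S e); rewrite ?subr_ge0.
exists c, d; split => [x hx|x].
  by rewrite -subr_ge0 slack sumr_ge0 // => e _; apply: gap_ge0.
split=> [[hx hagree]|[hx hd]]; split => //.
  apply/eqP; rewrite eq_sym -subr_eq0 slack; apply/eqP/big1 => e _.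
  rewrite /gap; case hDe: (D e) => //.
  by rewrite hagree ?hDe // cutvecE; case: cutb; rewrite ?subrr.
move=> e hDe; have := psumr_eq0P (fun e _ => gap_ge0 x e hx) _ (i := e) isT.
rewrite -slack hd subrr /gap (negbTE hDe) cutvecE => /(_ erefl).
by case: cutb => // /eqP; rewrite subr_eq0 => /eqP <-.
Qed.

Lemma vertex_cutvec S : is_vertex Q (cv S).
Proof.
have [c [d [hle hF]]] := is_face_agree_cut S pred0.
exists c, d; split => // x; split => [->|/hF [_ hx]].
  by apply/hF; split => [|e _]; first exact: cut_polytope_cutvec.
by apply/ffunP => e; exact: hx.
Qed.

Lemma convex_comb_two (I : finType) (g : I -> point R adj) (lam : {ffun I -> R})
    (p q : point R adj) :
  \sum_i lam i = 1 -> (forall i, lam i != 0 -> g i = p \/ g i = q) ->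
  exists t : R, [ffun e => \sum_i lam i * g i e] = [ffun e => p e + t * (q e - p e)].
Proof.
move=> h1 hg; exists (\sum_i lam i * (if g i == p then 0 else 1)).
apply/ffunP => e; rewrite !ffunE.
have pe : p e = \sum_i lam i * p e by rewrite -mulr_suml h1 mul1r.
set w := q e - p e; rewrite mulr_suml pe -big_split; apply: eq_bigr => i _ /=.
have [->|/hg [] ->] := eqVneq (lam i) 0; first by rewrite !mul0r add0r.
  by rewrite eqxx; ring.
by case: (eqVneq q p) => [->|_] /=; rewrite /w; ring.
Qed.

Lemma skel_adj_cutvec F S S' : is_face Q F -> F (cv S) -> F (cv S') -> cv S != cv S' ->
  (forall U, F (cv U) -> cv U = cv S \/ cv U = cv S') -> skel_adj Q (cv S) (cv S').
Proof.
move=> hF FS FS' neq honly.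
do 2 (split; first exact: vertex_cutvec); split; first exact/eqP.
exists F; split => //; split => //.
exists (cv S), (cv S'); do 2 (split => //); split; first exact/eqP.
move=> x Fx; have [c [d [_ /(_ x) [/(_ Fx) [[lam [hge [h1 hxl]]] _] _]]]] := hF.
rewrite hxl; apply: (convex_comb_two h1) => U hU; apply: honly.
by apply: (face_cutvec_support hF hge h1) hU; rewrite -hxl.
Qed.

Lemma agree_cut_symdiff S A : agree_cut S (cutb A) (cv (symdiff S A)).
Proof.
split => [|e /negbTE nA]; first exact: cut_polytope_cutvec.
by rewrite !cutvecE cutb_symdiff nA addbF.
Qed.

Lemma agree_cut_cutvec S A U : shores_connected A -> agree_cut S (cutb A) (cv U) ->
  cv U = cv S \/ cv U = cv (symdiff S A).
Proof.
move=> hA [_ hU]; set X := symdiff S U.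
have sub e : cutb X e -> cutb A e.
  apply: contraTT => nA; move/eqP: (hU e nA).
  by rewrite cutvec_eqE cutb_symdiff => /eqP ->; rewrite addbb.
have cutbU e : cutb U e = cutb S e (+) cutb X e by rewrite cutb_symdiff addKb.
by case: (cut_sub_shores_connected hA sub) => hX; [left|right];
  apply/ffunP => e; rewrite !cutvecE cutbU hX ?cutb_symdiff ?addbF.
Qed.

Lemma skel_adj_symdiff S A : shores_connected A ->
  cv S = cv (symdiff S A) \/ skel_adj Q (cv S) (cv (symdiff S A)).
Proof.
move=> hA; have [->|neq] := eqVneq (cv S) (cv (symdiff S A)); [by left|right].
apply: (skel_adj_cutvec (is_face_agree_cut S (cutb A))) => //.
- by split => [|e _]; first exact: cut_polytope_cutvec.
- exact: agree_cut_symdiff.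
- by move=> U; apply: agree_cut_cutvec.
Qed.

End CutVectors.

Section CompleteTripartite.
Variables (n1 n2 n3 : nat).
Local Notation V := (tri_vertex n1 n2 n3).
Local Notation tadj := (tri_adj n1 n2 n3).
Local Notation part := (@tri_part n1 n2 n3).

Lemma tri_adj_neq (x y : V) : tadj x y -> x != y.
Proof. by apply: contra => /eqP ->. Qed.

Definition mixed (X : {set V}) : bool :=
  [exists u in X, exists v in X, part u != part v].

Lemma mixedP (X : {set V}) u v : u \in X -> v \in X -> part u != part v -> mixed X.
Proof.
by move=> uX vX huv; apply/exists_inP; exists u => //; apply/exists_inP; exists v.
Qed.

Lemma mixed_induced_connected X : mixed X -> induced_connected tadj X.
Proof.
case/existsP=> u /andP [uX /existsP [v /andP [vX huv]]] f hf.
have to_u x : x \in X -> f x = f u.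
  move=> xX; have [xu|] := eqVneq (part x) (part u); last exact: hf.
  rewrite (hf x v) ?(hf v u) //; last by rewrite /tri_adj xu.
  by rewrite /tri_adj eq_sym.
by move=> x y xX yX; rewrite !to_u.
Qed.

Lemma mixed_shores_connected X : mixed X -> mixed (~: X) -> shores_connected tadj X.
Proof. by move=> mX mC; split; apply: mixed_induced_connected. Qed.

Lemma unmixed_part X : ~~ mixed X -> exists p, {in X, forall x, part x = p}.
Proof.
move=> nmX; case: (set_0Vmem X) => [->|[u uX]]; first by exists 0%N => x; rewrite inE.
exists (part u) => x xX; apply/eqP; apply: contraNT nmX => hxu.
exact: mixedP xX uX hxu.
Qed.

Hypotheses (n1_ge2 : (2 <= n1)%N) (n2_ge2 : (2 <= n2)%N) (n3_ge2 : (2 <= n3)%N).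

Definition a0 : V := inl (Ordinal (ltnW n1_ge2)).
Definition a1 : V := inl (Ordinal n1_ge2).
Definition b0 : V := inr (inl (Ordinal (ltnW n2_ge2))).
Definition b1 : V := inr (inl (Ordinal n2_ge2)).
Definition c0 : V := inr (inr (Ordinal (ltnW n3_ge2))).
Definition c1 : V := inr (inr (Ordinal n3_ge2)).

Lemma two_other_parts p : exists b b' c c' : V,
  [/\ b' != b, c' != c, part b' = part b, part c' = part c
    & [/\ part b != p, part c != p & part b != part c]].
Proof.
case: (eqVneq p 0%N) => [->|p_neq0]; first by exists b0, b1, c0, c1.
case: (eqVneq p 1%N) => [->|p_neq1]; first by exists a0, a1, c0, c1.
by exists a0, a1, b0, b1; split => //; split => //; rewrite eq_sym.
Qed.

Lemma shores_connected_in_part p (W : {set V}) : {in W, forall x, part x = p} ->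
  exists B, shores_connected tadj B /\ shores_connected tadj (symdiff B W).
Proof.
move=> Wp; have [b [b' [c [c' [bb' cc' eb ec [bp cp bc]]]]]] := two_other_parts p.
have notW z : part z != p -> z \notin W by move=> hz; apply: contraNN hz => /Wp ->.
have b'B : b' \notin [set b; c].
  by rewrite !inE negb_or bb' /=; apply: contraNneq bc => b'c; rewrite -eb b'c.
have c'B : c' \notin [set b; c].
  by rewrite !inE negb_or cc' andbT; apply: contraNneq bc => c'b; rewrite -ec c'b.
have bB : b \in [set b; c] by rewrite !inE eqxx.
have cB : c \in [set b; c] by rewrite !inE eqxx orbT.
have b'c' : part b' != part c' by rewrite eb ec.
exists [set b; c]; split; apply: mixed_shores_connected.
- exact: mixedP bB cB bc.
- by apply: (mixedP (u := b') (v := c')); rewrite ?in_setC.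
- apply: (mixedP (u := b) (v := c)); rewrite // in_symdiff.
    by rewrite bB (negbTE (notW b bp)).
  by rewrite cB (negbTE (notW c cp)).
- apply: (mixedP (u := b') (v := c')); rewrite // in_setC in_symdiff.
    by rewrite (negbTE b'B) (negbTE (notW b' _)) // eb.
  by rewrite (negbTE c'B) (negbTE (notW c' _)) // ec.
Qed.

Lemma shores_connected_split (W : {set V}) :
  exists B, shores_connected tadj B /\ shores_connected tadj (symdiff B W).
Proof.
case: (boolP (mixed W)) => [mW|/unmixed_part [p Wp]]; last first.
  exact: shores_connected_in_part Wp.
case: (boolP (mixed (~: W))) => [mC|/unmixed_part [p Cp]].
  exists set0; split.
    split; first exact: induced_connected0.
    by apply/mixed_induced_connected/(mixedP (u := a0) (v := b0)); rewrite ?inE.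
  have -> : symdiff set0 W = W by apply/setP => x; rewrite in_symdiff inE.
  exact: mixed_shores_connected.
have [B [hB hBC]] := shores_connected_in_part Cp.
exists B; split => //.
have -> : symdiff B W = ~: symdiff B (~: W).
  by apply/setP => x; rewrite !inE; case: (x \in B); case: (x \in W).
exact: shores_connectedC.
Qed.

Lemma tri_skel_walk2 (R : realFieldType) (S S' : {set V}) :
  walk_le (skel_adj (cut_polytope R tadj)) 2 (cutvec R tadj S) (cutvec R tadj S').
Proof.
have [B [hB hBW]] := shores_connected_split (symdiff S S').
have -> : S' = symdiff (symdiff S B) (symdiff B (symdiff S S')).
  apply/setP => x; rewrite !in_symdiff.
  by case: (x \in S); case: (x \in B); case: (x \in S').
apply: (walk_le2 (v := cutvec R tadj (symdiff S B))).
  exact: (skel_adj_symdiff R tri_adj_neq _ hB).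
exact: (skel_adj_symdiff R tri_adj_neq _ hBW).
Qed.

Definition part0 : {set V} := [set x | part x == 0%N].

Lemma cutvec_a0_split (R : realFieldType) e :
  cutvec R tadj [set a0] e + cutvec R tadj (part0 :\ a0) e =
  cutvec R tadj set0 e + cutvec R tadj part0 e.
Proof.
have [x [y [hxy he]]] := edge_ends e.
rewrite !cutvecE !(cutb_ends tri_adj_neq _ hxy he) !inE.
move: hxy; rewrite /tri_adj.
case: (eqVneq x a0) => [->|_]; case: (eqVneq y a0) => [->|_] //=.
- by rewrite eq_sym => /negbTE ->; rewrite add0r addr0.
- by move=> /negbTE ->; rewrite add0r addr0.
Qed.

Lemma tri_not_walk_le1 (R : realFieldType) :
  ~ walk_le (skel_adj (cut_polytope R tadj)) 1
      (cutvec R tadj set0) (cutvec R tadj part0).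
Proof.
pose e1 := edge_of (isT : tadj a0 b0); pose e2 := edge_of (isT : tadj a1 b0).
have cutvec_e1 X : cutvec R tadj X e1 = if (a0 \in X) (+) (b0 \in X) then 1 else 0.
  by rewrite cutvecE (cutb_edge_of tri_adj_neq).
have neq01 : cutvec R tadj set0 e1 != cutvec R tadj part0 e1.
  by rewrite !cutvec_e1 !inE /= eq_sym oner_neq0.
move=> walk01; case: (walk_le1 walk01) => [eq01|[_ [_ [_ [F [hF [hdim [F0 F1]]]]]]]].
  by move: neq01; rewrite eq01 eqxx.
have Fa0 : F (cutvec R tadj [set a0]).
  apply: (face_sum_mem hF F0 F1 _ _ (cutvec_a0_split R)); exact: cut_polytope_cutvec.
have a0_part0 : cutvec R tadj [set a0] = cutvec R tadj part0.
  by apply: (affdim1_eq hdim F0 F1 Fa0 neq01); rewrite !cutvec_e1 !inE.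
have := congr1 (fun x : point R tadj => x e2) a0_part0.
rewrite /= !cutvecE !(cutb_edge_of tri_adj_neq) !inE /=.
by move/eqP; rewrite eq_sym oner_eq0.
Qed.

End CompleteTripartite.

Theorem theorem10 (R : realFieldType) (n1 n2 n3 : nat) :
  (2 <= n1)%N -> (2 <= n2)%N -> (2 <= n3)%N ->
  skel_diameter (cut_polytope R (tri_adj n1 n2 n3)) 2.
Proof.
move=> n1_ge2 n2_ge2 n3_ge2; split.
  move=> u v /vertex_cutvecP [S ->] /vertex_cutvecP [S' ->].
  exact: tri_skel_walk2.
exists (cutvec R (tri_adj n1 n2 n3) set0).
exists (cutvec R (tri_adj n1 n2 n3) (part0 n1 n2 n3)).
do 2 (split; first exact: vertex_cutvec).
exact: tri_not_walk_le1.
Qed.
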